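(* Let $G$ be a finite abelian group of size $N$, let $\epsilon > 0$, $f:G\rightarrow \mathbb{R}$, and let $A\subseteq G$ have size $\alpha N$. Suppose that $B$ is a Bohr set in $G$ such that for every $t\in B$ \[\|f*1_A(\cdot + t) - f*1_A\|_{\infty} \leq \epsilon.\] Further assume that $\|f\|_1\leq 1/(2\alpha)$ and $f*1_A(0)\geq 1-\epsilon$. Then there exists $x\in G$ such that $B\cap (x+A)$ has density at least $2\alpha(1-2\epsilon)$ inside $B$, i.e. $|B\cap(x+A)|\geq 2\alpha(1-2\epsilon)|B|$.
   Context: For $\Gamma\subseteq\widehat{G}$ (the group of characters of $G$) and $0<\rho\leq 2$, the Bohr set $\mathrm{Bohr}(\Gamma,\rho)=\{x\in G: |1-\gamma(x)|\leq\rho \text{ for all }\gamma\in\Gamma\}$. Convolution: $f*g(x)=\sum_{t\in G}f(t)g(x-t)$. $\|f\|_1=\sum_{x}|f(x)|$, $\|f\|_\infty=\max_x|f(x)|$. *)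

From HB Require Import structures.
From mathcomp Require Import all_boot all_order all_algebra.
From mathcomp Require Import reals.
From mathcomp Require Import complex.
Set Implicit Arguments. Unset Strict Implicit. Unset Printing Implicit Defensive.
Import Order.TTheory GRing.Theory Num.Theory.
Local Open Scope ring_scope.
Local Open Scope complex_scope.

Definition is_character (R : rcfType) (G : finZmodType) (g : G -> R[i]) : Prop :=
  (forall x y : G, g (x + y) = g x * g y) /\ (forall x : G, `|g x| = 1).

Definition is_Bohr_set (R : rcfType) (G : finZmodType) (B : {set G}) : Prop :=
  exists (Gamma : (G -> R[i]) -> Prop) (rho : R),
    (forall g, Gamma g -> is_character g) /\ 0 < rho <= 2 /\
    (forall x : G, x \in B <-> (forall g, Gamma g -> `|1 - g x| <= rho%:C)).

Definition conv (R : ringType) (G : finZmodType) (f g : G -> R) (x : G) : R :=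
  \sum_(t : G) f t * g (x - t).

Definition indic (R : ringType) (G : finType) (A : {set G}) (x : G) : R :=
  (x \in A)%:R.

Definition norm1 (R : realDomainType) (G : finType) (f : G -> R) : R :=
  \sum_(x : G) `|f x|.

Definition normInf (R : realDomainType) (G : finType) (f : G -> R) : R :=
  \big[Num.max/0]_(x : G) `|f x|.

Definition translate (G : finZmodType) (x : G) (A : {set G}) : {set G} :=
  [set x + a | a in A].

From HB Require Import structures.
From mathcomp Require Import all_boot all_order all_algebra.
From mathcomp Require Import reals complex.
From mathcomp Require Import lra.
Set Implicit Arguments. Unset Strict Implicit. Unset Printing Implicit Defensive.
Import Order.TTheory GRing.Theory Num.Theory.
Local Open Scope ring_scope.

(* Summing f * 1_A over B counts, for each s, the points of B lying in s + A:
   sum_(t in B) (f * 1_A)(t) = sum_s f(s) |B ∩ (s + A)|.  Stability of f * 1_A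
   on B makes the left side at least (1 - 2 eps)|B|, while the right side is at
   most ||f||_1 max_s |B ∩ (s + A)| <= max_s |B ∩ (s + A)| / (2 alpha). *)

Lemma mem_translate (G : finZmodType) (s t : G) (A : {set G}) :
  (t \in translate s A) = (t - s \in A).
Proof.
apply/imsetP/idP => [[a aA ->]|tsA]; first by rewrite addrC addKr.
by exists (t - s); rewrite // addrC subrK.
Qed.

Lemma sum_conv_indic (R : nzRingType) (G : finZmodType) (f : G -> R)
    (A B : {set G}) :
  \sum_(t in B) conv f (indic R A) t =
  \sum_s f s * #|B :&: translate s A|%:R.
Proof.
rewrite /conv exchange_big /=; apply: eq_bigr => s _.
rewrite -mulr_sumr /indic -natr_sum -sum1_card.
congr (_ * _%:R); rewrite [LHS]big_mkcond [RHS]big_mkcond.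
apply: eq_bigr => t _.
by rewrite in_setI mem_translate; case: (t \in B); case: (t - s \in A).
Qed.

Lemma ler_normInf (R : realDomainType) (G : finType) (f : G -> R) (x : G) :
  `|f x| <= normInf f.
Proof. by rewrite /normInf (bigD1 x) //= le_max lexx. Qed.

Lemma ler_sub_normInf_shift (R : realDomainType) (G : finZmodType)
    (F : G -> R) (t : G) :
  F 0 - normInf (fun x => F (x + t) - F x) <= F t.
Proof.
have := ler_normInf (fun x => F (x + t) - F x) 0.
by rewrite add0r ler_distl => /andP[].
Qed.

Lemma ler_sum_mul_norm1 (R : realDomainType) (G : finType) (f : G -> R)
    (c : G -> nat) (x : G) :
  (forall s, c s <= c x)%N -> \sum_s f s * (c s)%:R <= norm1 f * (c x)%:R.
Proof.
move=> c_max; rewrite /norm1 mulr_suml; apply: ler_sum => s _.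
apply: le_trans (ler_norm _) _.
by rewrite normrM normr_nat ler_wpM2l // ler_nat.
Qed.

Theorem lemma1 (R : realType) (G : finZmodType) (eps alpha : R)
  (f : G -> R) (A B : {set G}) :
  0 < eps ->
  #|A|%:R = alpha * #|G|%:R ->
  is_Bohr_set R B ->
  (forall t, t \in B ->
     normInf (fun x => conv f (indic R A) (x + t) - conv f (indic R A) x) <= eps) ->
  norm1 f <= 1 / (2 * alpha) ->
  conv f (indic R A) 0 >= 1 - eps ->
  exists x : G,
    #|B :&: translate x A|%:R >= 2 * alpha * (1 - 2 * eps) * #|B|%:R.
Proof.
move=> _ A_card _ B_stable f_norm1 conv0.
pose c s := #|B :&: translate s A|.
have [x0 c_max] : exists x0, forall s, (c s <= c x0)%N.
  by case: (@arg_maxnP _ 0 predT c isT) => x0 _ c_max; exists x0 => s; apply: c_max.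
exists x0.
have : 0 <= alpha * #|G|%:R by rewrite -A_card.
rewrite pmulr_lge0; last by rewrite ltr0n; apply/card_gt0P; exists 0.
rewrite le0r => /orP[/eqP->|alpha_gt0]; first by rewrite mulr0 !mul0r.
have conv_B t : t \in B -> 1 - 2 * eps <= conv f (indic R A) t.
  move=> tB; have := ler_sub_normInf_shift (conv f (indic R A)) t.
  have := B_stable t tB; lra.
have sum_lo : (1 - 2 * eps) * #|B|%:R <= \sum_(t in B) conv f (indic R A) t.
  by rewrite mulr_natr -sumr_const; apply: ler_sum.
have sum_hi : \sum_(t in B) conv f (indic R A) t <= (2 * alpha)^-1 * (c x0)%:R.
  rewrite sum_conv_indic; apply: le_trans (ler_sum_mul_norm1 f c_max) _.
  by rewrite -div1r ler_wpM2r ?ler0n.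
rewrite -mulrA -ler_pdivlMl; first exact: le_trans sum_lo sum_hi.
by rewrite mulr_gt0.
Qed.
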